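(* Let $m$ be a positive integer with $\omega(m)\ge 2$. Then the $n$-ary functions $\mathrm{AND}_n$ can be realized by probabilistic $\mathrm{CC}^2[m]$-circuits of size polynomial in $n$ using $O(\log n)$ random bits. In fact, for two different primes $p,q$, this realization can be done by $\mathrm{CC}[p;q]$-circuits.
   Context: For an integer $m\ge 1$ and $A\subseteq\{0,\dots,m-1\}$, a gate $\mathrm{MOD}_m^A$ takes finitely many Boolean inputs (counted with multiplicity) and outputs $1$ if their sum modulo $m$ lies in $A$, and $0$ otherwise. A $\mathrm{CC}^h[m]$-circuit is a depth-$h$ Boolean circuit all of whose gates are of the form $\mathrm{MOD}_m^A$ ($A$ may vary between gates), multiple wires allowed. A $\mathrm{CC}[p;q]$-circuit is a depth-2 circuit whose gates on the first level (fed by the inputs) are of the form $\mathrm{MOD}_p^A$ and whose output gate on the second level is of the form $\mathrm{MOD}_q^A$. The size of a circuit is its number of gates. $\omega(m)$ is the number of distinct prime divisors of $m$. A probabilistic circuit realizing an $n$-ary Boolean function $f$ with $r$ random bits is a circuit $\Gamma$ with $n+r$ inputs such that for every $\bar a\in\{0,1\}^n$, for at least $\frac23$ of the tuples $\bar b\in\{0,1\}^r$ we have $\Gamma(\bar a,\bar b)=f(\bar a)$. *)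

From mathcomp Require Import all_boot.
Set Implicit Arguments. Unset Strict Implicit. Unset Printing Implicit Defensive.

(* MOD_m^A gate applied to a total (multiplicity-weighted) input sum k. *)
Definition mod_gate (m : nat) (A : {set 'I_m}) (k : nat) : bool :=
  [exists i in A, nat_of_ord i == k %% m].

(* Layered depth-2 circuit with N inputs: s first-level MOD_p gates fed by
   the inputs (wire multiplicities w1), and one output MOD_q gate fed by the
   first-level gates (multiplicities w2).  CC[p;q] circuits; with p = q = m
   this is a (layered) CC^2[m] circuit. *)
Record CC2 (p q N : nat) := MkCC2 {
  cc_s  : nat;
  cc_w1 : 'I_cc_s -> 'I_N -> nat;
  cc_A1 : 'I_cc_s -> {set 'I_p};
  cc_w2 : 'I_cc_s -> nat;
  cc_A2 : {set 'I_q} }.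
Arguments cc_s {p q N}.
Arguments cc_w1 {p q N}.
Arguments cc_A1 {p q N}.
Arguments cc_w2 {p q N}.
Arguments cc_A2 {p q N}.

Definition cc_size p q N (G : CC2 p q N) : nat := (cc_s G).+1.

Definition cc_eval p q N (G : CC2 p q N) (x : 'I_N -> bool) : bool :=
  mod_gate (cc_A2 G)
    (\sum_(j < cc_s G)
        cc_w2 G j * mod_gate (cc_A1 G j) (\sum_(i < N) cc_w1 G j i * x i)).

Definition join_inputs n r (a : {ffun 'I_n -> bool}) (b : {ffun 'I_r -> bool})
  : 'I_(n + r) -> bool :=
  fun i => match split i with inl j => a j | inr j => b j end.

Definition AND_n n (a : {ffun 'I_n -> bool}) : bool := [forall i, a i].

Definition prob_realizes p q n r (G : CC2 p q (n + r))
    (f : {ffun 'I_n -> bool} -> bool) : Prop :=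
  forall a : {ffun 'I_n -> bool},
    2 * 2 ^ r <= 3 * #|[set b : {ffun 'I_r -> bool} |
                          cc_eval G (join_inputs a b) == f a]|.

Definition AND_poly_logrand (p q : nat) : Prop :=
  exists C k : nat, forall n : nat,
    exists (r : nat) (G : CC2 p q (n + r)),
      [/\ cc_size G <= C * n.+1 ^ k,
          r <= C * (trunc_log 2 n).+1
        & prob_realizes G (@AND_n n)].

(* Hash the r random bits b to alpha b in GF(p^r) and let P_a be the sum of the
   X^i over the i with a_i = 0.  If AND a holds then P_a = 0; otherwise P_a is a
   nonzero polynomial of degree < n, so P_a(alpha b) = 0 for fewer than n of the
   2^r >= 3n values of b.  The test P_a(alpha b) = 0 is exact in CC[p;q]: for each
   rho the vector z_rho = (coordinates of P_a(alpha rho) over F_p, b - rho) is an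
   affine function of the inputs that vanishes iff rho = b and P_a(alpha b) = 0,
   and for z in F_p^K the weighted count of the t with z.t = 0 (weight 1) or
   z.t = 1 (weight q - 1) is p^K when z = 0 and divisible by q otherwise.  Each
   test z_rho.t = c is one MOD_p gate, the weighted count is read by one MOD_q gate,
   and with r = O(log n) the size 2^r p^(2r) is polynomial in n.  When p and q
   divide m, scaling the wire weights by m/p and m/q turns MOD_p and MOD_q gates
   into MOD_m gates. *)

From mathcomp Require Import all_boot all_order all_algebra all_field.
From mathcomp Require Import ring zify.
Set Implicit Arguments. Unset Strict Implicit. Unset Printing Implicit Defensive.
Import GRing.Theory passmx.

Lemma mod_gate_Fp p (P : pred 'F_p) k : prime p ->
  mod_gate [set i : 'I_p | P i%:R%R] k = P k%:R%R.
Proof.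
move=> pr_p; apply/existsP/idP => [[i /andP[]] | Pk].
  by rewrite inE => Pi /eqP ik; rewrite -(Fp_nat_mod pr_p) -ik.
exists (Ordinal (ltn_pmod k (prime_gt0 pr_p))).
by rewrite inE /= (Fp_nat_mod pr_p) Pk eqxx.
Qed.

Lemma mod_gate_eqmod q c k : 0 < q ->
  mod_gate [set i : 'I_q | i == c %% q :> nat] k = (k == c %[mod q]).
Proof.
move=> q_gt0; apply/existsP/eqP => [[i /andP[]] | kc].
  by rewrite inE => /eqP ic /eqP ik; rewrite -ik.
by exists (Ordinal (ltn_pmod k q_gt0)); rewrite inE /= kc eqxx.
Qed.

Definition lift_mod_set m d p (A : {set 'I_p}) : {set 'I_m} :=
  [set i : 'I_m | [exists j in A, i == d * j :> nat]].

Lemma mod_gate_lift m d p (A : {set 'I_p}) k : m = d * p -> 0 < d ->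
  mod_gate (lift_mod_set m d A) (d * k) = mod_gate A k.
Proof.
move=> -> d_gt0; rewrite /mod_gate -muln_modr.
apply/existsP/existsP => [[i /andP[]] | [j /andP[jA /eqP jk]]].
  rewrite inE => /existsP[j /andP[jA /eqP ->]].
  by rewrite eqn_pmul2l // => jk; exists j; rewrite jA.
have lt_dj : d * j < d * p by rewrite ltn_pmul2l.
exists (Ordinal lt_dj); rewrite inE /= jk eqxx andbT.
by apply/existsP; exists j; rewrite jA -jk eqxx.
Qed.

Lemma eqn_modMr_coprime k q a b : coprime k q ->
  (a * k == b * k %[mod q]) = (a == b %[mod q]).
Proof.
move=> co_kq; wlog le_ba : a b / b <= a.
  by move=> IH; case/orP: (leq_total b a) => /IH //; rewrite eq_sym [in RHS]eq_sym.
by rewrite !eqn_mod_dvd ?leq_mul2r ?le_ba ?orbT // -mulnBl Gauss_dvdl // coprime_sym.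
Qed.

Lemma big_pair (R : Type) (idx : R) (op : Monoid.com_law idx) (I J : finType)
    (F : I * J -> R) :
  \big[op/idx]_g F g = \big[op/idx]_i \big[op/idx]_j F (i, j).
Proof. by rewrite pair_bigA; apply: eq_bigr => -[]. Qed.

Lemma card_leq_inj (T U : finType) : #|T| <= #|U| -> {f : T -> U | injective f}.
Proof.
move=> le_TU; exists (fun x => enum_val (widen_ord le_TU (enum_rank x))).
by move=> x y /enum_val_inj /(congr1 val) /= /val_inj /enum_rank_inj.
Qed.

Section ComplementPoly.
Variables (R : nzRingType) (n : nat) (a : {ffun 'I_n -> bool}).
Local Open Scope ring_scope.

Definition compl_poly : {poly R} := \sum_(i < n | ~~ a i) 'X^i.

Lemma size_compl_poly : (size compl_poly <= n)%N.
Proof.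
apply: (big_ind (fun P : {poly R} => size P <= n)%N) => [|P Q sP sQ|i _].
- by rewrite size_poly0.
- by rewrite (leq_trans (size_polyD _ _)) // geq_max sP sQ.
- by rewrite size_polyXn ltn_ord.
Qed.

Lemma compl_poly_eq0 : (compl_poly == 0) = [forall i, a i].
Proof.
apply/eqP/forallP => [P0 i | all_a]; last first.
  by rewrite /compl_poly big_pred0 // => i; rewrite all_a.
apply/negPn/negP => ai; move/(congr1 (fun P : {poly R} => P`_i)): P0.
rewrite coef_sum coef0 (bigD1 i) //= coefXn eqxx big1 ?addr0 => [|j /andP[_ ji]].
  by move/eqP; rewrite oner_eq0.
by rewrite coefXn; case: eqP => // /val_inj ij; rewrite ij eqxx in ji.
Qed.

End ComplementPoly.

Lemma card_roots_inj (R : idomainType) (T : finType) (f : T -> R) (P : {poly R}) :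
  injective f -> P != 0%R -> (#|[set x | root P (f x)]| < size P)%N.
Proof.
move=> f_inj P_neq0; rewrite cardE -(size_map f).
apply: max_poly_roots => //; last by rewrite (map_inj_uniq f_inj) enum_uniq.
by apply/allP => y /mapP[x]; rewrite mem_enum inE => Px ->.
Qed.

Section DotLevels.
Variables (F : finFieldType) (K : nat) (z : 'rV[F]_K).
Local Open Scope ring_scope.

Lemma sum_dot_level_indep (c d : F) : z != 0 ->
  (\sum_(t : 'rV[F]_K) ((z *m t^T) 0 0 == c)%R =
   \sum_(t : 'rV[F]_K) ((z *m t^T) 0 0 == d)%R)%N.
Proof.
move=> z_neq0; have [k0 zk0] : exists k0, z 0 k0 != 0.
  apply/existsP; apply: contraR z_neq0 => /existsPn zk0.
  by apply/eqP/rowP => k; rewrite mxE; apply/eqP/negPn.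
pose shift (t : 'rV[F]_K) := t + ((c - d) / z 0 k0) *: delta_mx 0 k0.
have shift_inj : injective shift by apply: addIr.
have dot_shift t : (z *m (shift t)^T) 0 0 = (z *m t^T) 0 0 + (c - d).
  rewrite linearD linearZ /= trmx_delta mulmxDr -scalemxAr -colE !mxE.
  by rewrite divfK.
rewrite (reindex_inj shift_inj); apply: eq_bigr => t _.
by rewrite dot_shift addrA subr_eq [c + d]addrC (inj_eq (addIr c)).
Qed.

Lemma dot_gadget_mod q : (0 < q)%N ->
  (\sum_(t : 'rV[F]_K)
      (((z *m t^T) 0 0 == 0)%R + q.-1 * ((z *m t^T) 0 0 == 1)%R) =
   (z == 0)%R * #|F| ^ K %[mod q])%N.
Proof.
move=> q_gt0; have [-> | z_neq0] := eqVneq z 0.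
  rewrite (eq_bigr (fun _ => 1%N)) => [|t _]; last first.
    by rewrite mul0mx mxE eqxx eq_sym oner_eq0 muln0.
  by rewrite sum1_card card_mx !mul1n.
rewrite big_split -big_distrr /= (sum_dot_level_indep 1 0 z_neq0).
by rewrite -{1}[\sum_t _]mul1n -mulnDl add1n prednK // modnMr mul0n mod0n.
Qed.

End DotLevels.

Section AffineCircuit.
Variables (p q N : nat).
Hypothesis pr_p : prime p.
Local Open Scope ring_scope.

Definition bool_rV (x : 'I_N -> bool) : 'rV['F_p]_N := \row_j (x j)%:R.

Lemma bool_rV_inj : injective (fun x : {ffun 'I_N -> bool} => bool_rV x).
Proof.
move=> x y /rowP xy; apply/ffunP => i; move: (xy i); rewrite !mxE.
by case: (x i) (y i) => -[] //= /eqP; rewrite ?oner_eq0 // eq_sym oner_eq0.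
Qed.

Definition cc_affine (T : finType) (w : T -> 'cV['F_p]_N) (e : T -> 'F_p)
    (o : T -> nat) (A : {set 'I_q}) : CC2 p q N :=
  @MkCC2 p q N #|{: T}| (fun j i => w (enum_val j) i 0)
    (fun j => [set i : 'I_p | i%:R + e (enum_val j) == 0])
    (fun j => o (enum_val j)) A.

Lemma cc_affineE T w e o A x :
  cc_eval (@cc_affine T w e o A) x =
  mod_gate A (\sum_g o g * ((bool_rV x *m w g) 0 0 + e g == 0)%R)%N.
Proof.
rewrite /cc_eval /=; congr mod_gate.
rewrite -(big_enum_val (fun g => o g * mod_gate [set i : 'I_p | (i%:R + e g == 0)%R]
                                          (\sum_i w g i 0%R * x i))%N) /=.
apply: eq_bigr => g _; rewrite (@mod_gate_Fp p (fun y => y + e g == 0)) // natr_sum mxE.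
congr (_ * nat_of_bool (_ + _ == _)%R)%N.
by apply: eq_bigr => i _; rewrite natrM natr_Zp mxE mulrC.
Qed.

End AffineCircuit.

Lemma bool_rV_join p n r (a : {ffun 'I_n -> bool}) (b : {ffun 'I_r -> bool}) :
  bool_rV p (join_inputs a b) = row_mx (bool_rV p a) (bool_rV p b).
Proof.
apply/rowP => j; rewrite -(splitK j) !mxE /join_inputs unsplitK.
by case: (split j) => k; rewrite ?row_mxEl ?row_mxEr mxE.
Qed.

Section CountZeros.
Variables (p q N K : nat).
Hypotheses (pr_p : prime p) (co_pq : coprime p q).
Variables (R : finType) (M : R -> 'M['F_p]_(N, K)) (c : R -> 'rV['F_p]_K).
Local Open Scope ring_scope.

(* The gate for (rho, t, b) tests z_rho.t = b, where z_rho = x M_rho + c_rho;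
   weighting b = 0 by 1 and b = 1 by q - 1, the output gate sees
   #{rho | z_rho = 0} * p^K modulo q by dot_gadget_mod. *)
Definition cc_count_zeros : CC2 p q N :=
  cc_affine (T := (R * ('rV['F_p]_K * bool))%type) (fun g => M g.1 *m g.2.1^T)
    (fun g => (c g.1 *m g.2.1^T) 0 0 - g.2.2%:R)
    (fun g => if g.2.2 then q.-1 else 1%N) [set i : 'I_q | i == (p ^ K %% q)%N :> nat].

Lemma cc_count_zerosE x :
  cc_eval cc_count_zeros x =
  (#|[set rho | (bool_rV p x *m M rho + c rho == 0)%R]| == 1 %[mod q])%N.
Proof.
have q_gt0 : (0 < q)%N.
  by case: q co_pq => // /eqP; rewrite gcdn0 => p1; move: pr_p; rewrite p1.
rewrite cc_affineE // mod_gate_eqmod //.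
set z := fun rho => bool_rV p x *m M rho + c rho.
have dotE rho (t : 'rV['F_p]_K) (b : 'F_p) :
    ((bool_rV p x *m (M rho *m t^T)) 0 0 + ((c rho *m t^T) 0 0 - b) == 0) =
    ((z rho *m t^T) 0 0 == b).
  by rewrite mulmxA addrA subr_eq0 mulmxDl [in RHS]mxE.
have sum_mod : (\sum_rho \sum_(t : 'rV['F_p]_K)
                 (((z rho *m t^T) 0 0 == 0)%R + q.-1 * ((z rho *m t^T) 0 0 == 1)%R)
               = #|[set rho | (z rho == 0)%R]| * p ^ K %[mod q])%N.
  rewrite -modn_summ.
  under eq_bigr => rho _ do rewrite dot_gadget_mod //.
  rewrite modn_summ -big_distrl /= card_Fp // -sum1dep_card.
  by congr (_ * _ %% _)%N; rewrite [RHS]big_mkcond; apply: eq_bigr => rho _; case: ifP.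
rewrite big_pair.
under eq_bigr => rho _ do rewrite big_pair.
under eq_bigr => rho _ do
  under eq_bigr => t _ do rewrite big_bool /= !dotE mul1n addnC.
rewrite sum_mod -[in X in _ == X](mul1n (p ^ K)%N) eqn_modMr_coprime //.
exact: coprimeXl.
Qed.

End CountZeros.

Section HashedAND.
Variables (p q : nat).
Hypotheses (pr_p : prime p) (q_gt1 : 1 < q) (co_pq : coprime p q).
Variables (F0 : finFieldType) (pcharF : p \in [pchar F0]%R).
Local Notation F := (pPrimeCharType pcharF).
Local Notation D := (\dim {:F}).
Local Notation coords := (rVof (vbasis {:F})).
Variables (n r : nat) (alpha : {ffun 'I_r -> bool} -> F).
Local Open Scope ring_scope.

Definition power_coords rho : 'M['F_p]_(n, D) :=
  \matrix_(i < n) coords (alpha rho ^+ i).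

Definition AND_matrix rho : 'M['F_p]_(n + r, D + r) :=
  block_mx (- power_coords rho) 0 0 1%:M.

Definition AND_shift rho : 'rV['F_p]_(D + r) :=
  row_mx (\sum_(i < n) coords (alpha rho ^+ i)) (- bool_rV p rho).

Definition cc_AND : CC2 p q (n + r) := cc_count_zeros q AND_matrix AND_shift.

Lemma coords_compl_poly a rho :
  coords (compl_poly F a).[alpha rho] =
  \sum_(i < n) coords (alpha rho ^+ i) - bool_rV p a *m power_coords rho.
Proof.
rewrite horner_sum raddf_sum mulmx_sum_row -sumrB big_mkcond /=.
apply: eq_bigr => i _; rewrite rowK mxE hornerXn.
by case: (a i); rewrite /= ?scale1r ?subrr ?scale0r ?subr0.
Qed.

Lemma AND_system_eq0 a b rho :
  (bool_rV p (join_inputs a b) *m AND_matrix rho + AND_shift rho == 0) =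
  ((compl_poly F a).[alpha rho] == 0) && (rho == b).
Proof.
rewrite bool_rV_join mul_row_block !mulmx0 addr0 add0r mulmx1 add_row_mx.
rewrite row_mx_eq0 mulmxN addrC -coords_compl_poly (rVof_eq0 (vbasisP _)).
by rewrite subr_eq0 (inj_eq (@bool_rV_inj p r)) [b == _]eq_sym.
Qed.

Lemma cc_ANDE a b :
  cc_eval cc_AND (join_inputs a b) = ((compl_poly F a).[alpha b] == 0).
Proof.
rewrite cc_count_zerosE //.
have sol rho : (bool_rV p (join_inputs a b) *m AND_matrix rho + AND_shift rho == 0) =
               ((compl_poly F a).[alpha b] == 0) && (rho == b).
  by rewrite AND_system_eq0; case: (eqVneq rho b) => [-> | _]; rewrite ?andbF.
case: (eqVneq (compl_poly F a).[alpha b] 0) => Pb.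
  rewrite (_ : [set rho | _] = [set b]) ?cards1 ?eqxx //.
  by apply/setP => rho; rewrite !inE sol Pb eqxx.
rewrite (_ : [set rho | _] = set0) ?cards0 ?mod0n ?modn_small //.
by apply/setP => rho; rewrite !inE sol (negbTE Pb).
Qed.

Lemma cc_AND_size : cc_size cc_AND = (2 ^ r * (p ^ (D + r) * 2)).+1%N.
Proof.
by rewrite /cc_size /= !card_prod card_ffun card_bool card_ord card_mx card_Fp // mul1n.
Qed.

Hypothesis alpha_inj : injective alpha.

Lemma cc_AND_realizes : (3 * n <= 2 ^ r)%N -> prob_realizes cc_AND (@AND_n n).
Proof.
move=> rand_ok a; rewrite /AND_n -(compl_poly_eq0 F).
have [P0 | P_neq0] := eqVneq (compl_poly F a) 0.
  rewrite (_ : [set b | _] = setT) ?cardsT ?card_ffun ?card_bool ?card_ord.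
    by rewrite leq_mul2r leqnSn orbT.
  by apply/setP => b; rewrite !inE cc_ANDE P0 horner0 eqxx.
rewrite (_ : [set b | _] = ~: [set b | root (compl_poly F a) (alpha b)]); last first.
  by apply/setP => b; rewrite !inE cc_ANDE eqbF_neg.
set bad := [set b | root (compl_poly F a) (alpha b)].
have bad_lt : (#|bad| < n)%N.
  exact: leq_trans (card_roots_inj alpha_inj P_neq0) (size_compl_poly F a).
have := cardsC bad; rewrite card_ffun card_bool card_ord; lia.
Qed.

End HashedAND.

Lemma exp2_trunc_log2_le n : 2 ^ trunc_log 2 n <= n.+1.
Proof.
case: (posnP n) => [-> // | n_gt0].
exact: leq_trans (trunc_logP (isT : 1 < 2) n_gt0) _.
Qed.

Lemma expn_trunc_log2_le p n : p ^ trunc_log 2 n <= n.+1 ^ p.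
Proof.
have le_expn e a b : a <= b -> a ^ e <= b ^ e.
  by case: e => [// | e] le_ab; rewrite leq_exp2r.
apply: (@leq_trans ((2 ^ p) ^ trunc_log 2 n)).
  exact/le_expn/ltnW/ltn_expl.
by rewrite expnAC; apply/le_expn/exp2_trunc_log2_le.
Qed.

Lemma AND_size_bound p n (t := trunc_log 2 n) : 1 < p ->
  (2 ^ t.+3 * (p ^ (t.+3 + t.+3) * 2)).+1 <= 17 * p ^ 6 * n.+1 ^ (2 * p).+1.
Proof.
move=> p_gt1; have le_2t : 2 ^ t <= n.+1 := exp2_trunc_log2_le n.
have le_pt : p ^ t <= n.+1 ^ p := expn_trunc_log2_le p n.
have -> : 2 ^ t.+3 * (p ^ (t.+3 + t.+3) * 2) = 16 * p ^ 6 * (2 ^ t * (p ^ t * p ^ t)).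
  by rewrite !expnS !expnD !expnS; ring.
have -> : n.+1 ^ (2 * p).+1 = n.+1 * (n.+1 ^ p * n.+1 ^ p).
  by rewrite expnS mul2n -addnn expnD.
apply: leq_ltn_trans (leq_mul (leqnn _) (leq_mul le_2t (leq_mul le_pt le_pt))) _.
by rewrite -!mulnA ltn_pmul2r // !muln_gt0 !expn_gt0 (ltnW p_gt1).
Qed.

Lemma AND_rand_bits_enough n : 3 * n <= 2 ^ (trunc_log 2 n).+3.
Proof. by have := trunc_log_ltn n (isT : 1 < 2); rewrite !expnS; lia. Qed.

Lemma AND_rand_bits_log p n : 0 < p ->
  (trunc_log 2 n).+3 <= 17 * p ^ 6 * (trunc_log 2 n).+1.
Proof.
move=> p_gt0; apply: (@leq_trans (17 * (trunc_log 2 n).+1)); first lia.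
by rewrite leq_mul2r leq_pmulr ?orbT // expn_gt0 p_gt0.
Qed.

Lemma AND_poly_logrand_coprime p q :
  prime p -> 1 < q -> coprime p q -> AND_poly_logrand p q.
Proof.
move=> pr_p q_gt1 co_pq; exists (17 * p ^ 6), (2 * p).+1 => n.
set t := trunc_log 2 n; set r := t.+3.
have [F0 pcharF cardF0] := pPrimePowerField pr_p (isT : 0 < r).
have cardF : #|pPrimeCharType pcharF| = p ^ r := cardF0.
have dimF : \dim {:pPrimeCharType pcharF} = r.
  by rewrite pprimeChar_dimf cardF pfactorK.
have [alpha alpha_inj] : {alpha : {ffun 'I_r -> bool} -> pPrimeCharType pcharF
                          | injective alpha}.
  by apply: card_leq_inj; rewrite card_ffun card_bool card_ord cardF leq_exp2r ?prime_gt1.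
exists r, (cc_AND q n alpha); split.
- by rewrite cc_AND_size // dimF; apply/AND_size_bound/prime_gt1.
- exact: AND_rand_bits_log n (prime_gt0 pr_p).
- by apply: cc_AND_realizes => //; apply: AND_rand_bits_enough.
Qed.

Section Lift.
Variables (m p q N : nat).
Hypotheses (m_gt0 : 0 < m) (p_dvd_m : p %| m) (q_dvd_m : q %| m).

Definition cc_lift (G : CC2 p q N) : CC2 m m N :=
  @MkCC2 m m N (cc_s G) (fun j i => m %/ p * cc_w1 G j i)
    (fun j => lift_mod_set m (m %/ p) (cc_A1 G j)) (fun j => m %/ q * cc_w2 G j)
    (lift_mod_set m (m %/ q) (cc_A2 G)).

Lemma mod_gate_lift_dvd d (A : {set 'I_d}) k : d %| m ->
  mod_gate (lift_mod_set m (m %/ d) A) (m %/ d * k) = mod_gate A k.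
Proof.
move=> d_dvd_m; apply: mod_gate_lift; first by rewrite (divnK d_dvd_m).
by rewrite divn_gt0 ?(dvdn_gt0 m_gt0 d_dvd_m) // dvdn_leq.
Qed.

Lemma cc_liftE G x : cc_eval (cc_lift G) x = cc_eval G x.
Proof.
rewrite /cc_eval /= -(mod_gate_lift_dvd _ _ q_dvd_m) big_distrr /=.
congr mod_gate; apply: eq_bigr => j _; rewrite -mulnA; congr (_ * (_ * _)).
rewrite -(mod_gate_lift_dvd _ _ p_dvd_m) big_distrr /=.
by congr mod_gate; apply: eq_bigr => i _; rewrite mulnA.
Qed.

End Lift.

Lemma AND_poly_logrand_lift m p q : 0 < m -> p %| m -> q %| m ->
  AND_poly_logrand p q -> AND_poly_logrand m m.
Proof.
move=> m_gt0 p_dvd_m q_dvd_m [C [k AND_pq]]; exists C, k => n.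
have [r [G [G_size r_le G_AND]]] := AND_pq n.
exists r, (cc_lift m G); split => // a.
by under eq_finset do rewrite cc_liftE //; apply: G_AND.
Qed.

Lemma AND_poly_logrand_primes p q :
  prime p -> prime q -> p != q -> AND_poly_logrand p q.
Proof.
move=> pr_p pr_q neq_pq; apply: AND_poly_logrand_coprime => //.
  exact: prime_gt1.
by rewrite prime_coprime // dvdn_prime2.
Qed.

Theorem theorem1p3 :
  (forall m : nat, 0 < m -> 2 <= size (primes m) -> AND_poly_logrand m m) /\
  (forall p q : nat, prime p -> prime q -> p != q -> AND_poly_logrand p q).
Proof.
split=> [m m_gt0 two_primes | ]; last exact: AND_poly_logrand_primes.
have [p_in q_in] : nth 0 (primes m) 0 \in primes m /\ nth 0 (primes m) 1 \in primes m.
  by split; apply: mem_nth; apply: leq_trans two_primes.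
move: p_in q_in; rewrite !mem_primes => /and3P[pr_p _ p_dvd] /and3P[pr_q _ q_dvd].
apply: (AND_poly_logrand_lift m_gt0 p_dvd q_dvd); apply: AND_poly_logrand_primes => //.
by rewrite nth_uniq ?primes_uniq // (leq_trans _ two_primes).
Qed.
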